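(* Let $S$ be a stacked $2$-sphere, $\alpha=abc$ and $\beta=abd$ two triangles of $S$, and $\overline{\alpha},\overline{\beta}$ the unique tetrahedra of $\overline{S}$ containing $\alpha,\beta$. Let $\sigma$ be a tetrahedron of $\overline{S}$ which is a node of degree four in $\Lambda(\overline{S})$, and let $G_1,G_2,G_3,G_4$ be the connected components of $\Lambda(\overline{S})-\sigma$. If the $2$-sphere $T$ obtained from $S$ by the edge flip $ab\mapsto cd$ is also a stacked $2$-sphere, then: (i) $\sigma$ is a tetrahedron of $\overline{T}$; (ii) $\sigma$ is a node of degree four in $\Lambda(\overline{T})$; (iii) $\overline{\alpha}$ and $\overline{\beta}$ lie in the same component of $\Lambda(\overline{S})-\sigma$, say $G_4$; and (iv) the components of $\Lambda(\overline{T})-\sigma$ are $G_1,G_2,G_3,G_4'$ for some tree $G_4'$.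
   Context: A triangulated $2$-sphere is a finite simplicial complex whose geometric realization is homeomorphic to the $2$-sphere. Edge flip $ab\mapsto cd$: if $abc,abd$ are triangles and $cd$ is not an edge, replace $abc,abd$ by $acd,bcd$. A stacked $3$-ball is a simplicial complex obtained from a single tetrahedron by repeatedly gluing a new tetrahedron along exactly one boundary triangle, introducing one new vertex each time. A stacked $2$-sphere is a triangulated $2$-sphere isomorphic to the boundary of a stacked $3$-ball. For a stacked $2$-sphere $S$, $\overline{S}$ denotes the simplicial complex whose faces are all cliques of the edge graph of $S$; it is known that $\overline{S}$ is a stacked $3$-ball with boundary $S$, unique up to isomorphism. Each triangle $\alpha$ of $S$ lies in a unique tetrahedron $\overline{\alpha}$ of $\overline{S}$. The dual graph $\Lambda(C)$ of a complex made of tetrahedra has the tetrahedra as nodes, adjacent iff they share a triangle; $\Lambda(C)-\sigma$ is the graph with node $\sigma$ deleted. *)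

From HB Require Import structures.
From mathcomp Require Import all_boot.
Set Implicit Arguments. Unset Strict Implicit. Unset Printing Implicit Defensive.

(* A pure 2-/3-dimensional simplicial complex is represented by its set of
   facets (triangles, resp. tetrahedra), each a finite set of vertices. *)

Section Defs.
Variable W : finType.

Definition boundary (B : {set {set W}}) : {set {set W}} :=
  [set tri : {set W} | (#|tri| == 3) && (#|[set s in B | tri \subset s]| == 1)].

Inductive stacked_ball : {set {set W}} -> Prop :=
| sb_base (t : {set W}) : #|t| = 4 -> stacked_ball [set t]
| sb_step (B : {set {set W}}) (tri : {set W}) (v : W) :
    stacked_ball B -> tri \in boundary B ->
    (forall s, s \in B -> v \notin s) ->
    stacked_ball ((v |: tri) |: B).
End Defs.

Definition stacked_sphere (V : finType) (S : {set {set V}}) : Prop :=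
  exists (W : finType) (f : V -> W), injective f /\
    exists B : {set {set W}}, stacked_ball B /\
      boundary B = [set f @: (tri : {set V}) | tri in S].

Section Sbar.
Variable V : finType.

Definition is_edge (S : {set {set V}}) (x y : V) : bool :=
  [exists tri in S, (x \in tri) && (y \in tri)].

Definition sbar_tets (S : {set {set V}}) : {set {set V}} :=
  [set t : {set V} | (#|t| == 4) &&
     [forall x in t, forall y in t, (x != y) ==> is_edge S x y]].

Definition dual_adj (s t : {set V}) : bool := #|s :&: t| == 3.

Definition dual_adj_minus (C : {set {set V}}) (sigma : {set V}) : rel {set V} :=
  fun s t => [&& s \in C, t \in C, s != sigma, t != sigma & dual_adj s t].

Definition dual_deg (C : {set {set V}}) (sigma : {set V}) : nat :=
  #|[set t in C | dual_adj sigma t]|.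

Definition comps_minus (C : {set {set V}}) (sigma : {set V}) : {set {set {set V}}} :=
  [set [set t in C :\ sigma | connect (dual_adj_minus C sigma) s t]
    | s in C :\ sigma].

Definition dual_tree (G : {set {set V}}) : Prop :=
  G != set0 /\
  {in G &, forall x y,
     connect (fun s t => [&& s \in G, t \in G & dual_adj s t]) x y} /\
  ~ (exists c : seq {set V},
       [&& all (fun s => s \in G) c, 3 <= size c & ucycleb dual_adj c]).

Definition flip (S : {set {set V}}) (a b c d : V) : {set {set V}} :=
  [set [set a; c; d]; [set b; c; d]] :|: ((S :\ [set a; b; c]) :\ [set a; b; d]).
End Sbar.

From mathcomp Require Import all_boot zify.
Set Implicit Arguments. Unset Strict Implicit. Unset Printing Implicit Defensive.

(* Let x be the fourth vertex of alphabar, so alphabar = abcx.  In a stacked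
   sphere the edge graph has no K5 and every 4-cycle of it has a chord.  Using
   this in S and in the flipped sphere T, where ab is no longer an edge, one
   finds betabar = abdx and that the tetrahedra of T-bar are those of S-bar
   except alphabar and betabar, together with gamma = acdx and delta = bcdx.
   Any other tetrahedron is adjacent to as many of alphabar, betabar as of
   gamma, delta.  Since alphabar and betabar contain a triangle of S they have
   degree at most 3, so sigma is none of the four and its degree is unchanged;
   moreover Lambda(T-bar) - sigma arises from Lambda(S-bar) - sigma by
   replacing the adjacent pair alphabar, betabar by the adjacent pair gamma,
   delta.  Only the component of alphabar changes, and the new one is a tree
   because dual graphs of stacked balls are acyclic. *)

(** * Finite sets *)

Section FinsetFacts.
Variable T : finType.
Implicit Types (A B K : {set T}) (x y z w : T).

Lemma eq_subset_card A B : A \subset B -> #|B| <= #|A| -> A = B.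
Proof. by move=> sAB leBA; apply/eqP; rewrite eqEcard sAB. Qed.

Lemma cardsD1_in A x : x \in A -> #|A :\ x| = #|A|.-1.
Proof. by move=> xA; rewrite (cardsD1 x A) xA. Qed.

Lemma cardsD2 A x y : x != y -> #|A| = (x \in A) + (y \in A) + #|A :\ x :\ y|.
Proof.
by move=> xy; rewrite (cardsD1 x A) (cardsD1 y (A :\ x)) in_setD1 eq_sym xy addnA.
Qed.

Lemma cards3 x y z : x != y -> x != z -> y != z -> #|[set x; y; z]| = 3.
Proof.
by move=> xy xz yz; rewrite setUC cardsU1 cards2 xy !inE negb_or !(eq_sym z) xz yz.
Qed.

Lemma cards3_neq x y z : #|[set x; y; z]| = 3 -> [/\ x != y, x != z & y != z].
Proof.
move=> c3; split; apply: contra_eqN c3 => /eqP->.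
- by rewrite setUid cards2; case: (y != z).
- by rewrite setUAC setUid cards2; case: (z != y).
- by rewrite -setUA setUid cards2; case: (x != z).
Qed.

Lemma cards4 x y z w : x != y -> x != z -> x != w -> y != z -> y != w -> z != w ->
  #|[set x; y; z; w]| = 4.
Proof.
move=> xy xz xw yz yw zw.
by rewrite setUC cardsU1 cards3 // !inE !negb_or !(eq_sym w) xw yw zw.
Qed.

Lemma exists_avoid1 K x : 1 < #|K| -> exists2 w, w \in K & w != x.
Proof.
move=> gt1; have : 0 < #|K :\ x| by have := cardsD1 x K; lia.
by case/card_gt0P => w; rewrite !inE => /andP[? ?]; exists w.
Qed.

Lemma exists_avoid2 K x y : 2 < #|K| -> exists w, [/\ w \in K, w != x & w != y].
Proof.
move=> gt2; have : 0 < #|K :\ x :\ y|.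
  by have := cardsD1 x K; have := cardsD1 y (K :\ x); lia.
by case/card_gt0P => w; rewrite !inE => /and3P[? ? ?]; exists w.
Qed.

Lemma card3_subset_card4 A B : #|A| = 4 -> B \subset A -> #|B| = 3 ->
  exists2 w, w \in A :\: B & B = A :\ w.
Proof.
move=> cA sBA cB; have : #|A :\: B| == 1 by rewrite cardsD (setIidPr sBA) cA cB.
case/cards1P => w eAB; have wAB : w \in A :\: B by rewrite eAB set11.
exists w => //; move: wAB; rewrite inE => /andP[wB _].
apply/setP => u; rewrite in_setD1; apply/idP/andP => [uB|[uw uA]].
  by split; [apply: contraNneq wB => <- | exact: subsetP sBA u uB].
apply/negPn/negP => uB; have : u \in A :\: B by rewrite inE uB.
by rewrite eAB inE (negbTE uw).
Qed.

(* Each [Bi] is [A] minus one of the two points of [A :\ x :\ y]. *)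
Lemma card3_subsets_through_pair A x y B1 B2 B3 : #|A| = 4 -> x != y ->
  B1 \subset A -> B2 \subset A -> B3 \subset A ->
  #|B1| = 3 -> #|B2| = 3 -> #|B3| = 3 ->
  x \in B1 -> y \in B1 -> x \in B2 -> y \in B2 -> x \in B3 -> y \in B3 ->
  [\/ B1 = B2, B1 = B3 | B2 = B3].
Proof.
move=> cA xy s1 s2 s3 c1 c2 c3 x1 y1 x2 y2 x3 y3.
have omit B : B \subset A -> #|B| = 3 -> x \in B -> y \in B ->
    exists2 w, w \in A :\ x :\ y & B = A :\ w.
  move=> sBA cB xB yB; case: (card3_subset_card4 cA sBA cB) => w.
  rewrite inE => /andP[wB wA] eB; exists w => //.
  by rewrite !inE wA andbT; apply/andP; split; apply: contraNneq wB => ->.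
have small : #|A :\ x :\ y| <= 2.
  have := cardsD1 x A; have := cardsD1 y (A :\ x).
  by rewrite !inE eq_sym xy (subsetP s1 _ x1) (subsetP s1 _ y1); lia.
case: (omit _ s1 c1 x1 y1) => w1 w1A ->; case: (omit _ s2 c2 x2 y2) => w2 w2A ->.
case: (omit _ s3 c3 x3 y3) => w3 w3A ->.
case: (eqVneq w1 w2) => [->|n12]; first by constructor 1.
case: (eqVneq w1 w3) => [->|n13]; first by constructor 2.
case: (eqVneq w2 w3) => [->|n23]; first by constructor 3.
suff : 2 < #|A :\ x :\ y| by rewrite ltnNge small.
by apply/card_gt2P; exists w1, w2, w3; rewrite eq_sym in n13.
Qed.

Lemma cardsI1 A x : #|A :&: [set x]| = (x \in A).
Proof.
case: (boolP (x \in A)) => xA.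
  by rewrite (setIidPr _) ?cards1 // sub1set.
rewrite (_ : A :&: [set x] = set0) ?cards0 //; apply/setP => u; rewrite !inE.
by apply: contraNF xA => /andP[uA /eqP <-].
Qed.

Lemma cardsI_setU1 A B x : x \notin B -> #|A :&: (B :|: [set x])| = #|A :&: B| + (x \in A).
Proof.
move=> xB; rewrite setIUr; case: (boolP (x \in A)) => xA.
  have -> : A :&: [set x] = [set x] by apply/setIidPr; rewrite sub1set.
  by rewrite setUC cardsU1 inE (negbTE xB) andbF addnC.
have -> : A :&: [set x] = set0.
  by apply/setP => u; rewrite !inE; apply: contraNF xA => /andP[uA /eqP <-].
by rewrite setU0 addn0.
Qed.

Lemma cardsI_set4 A x y z w : x != y -> x != z -> x != w -> y != z -> y != w -> z != w ->
  #|A :&: [set x; y; z; w]| = (x \in A) + (y \in A) + (z \in A) + (w \in A).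
Proof.
move=> xy xz xw yz yw zw.
have [yx zx wx] : [/\ y != x, z != x & w != x] by split; rewrite eq_sym.
have [zy wy wz] : [/\ z != y, w != y & w != z] by split; rewrite eq_sym.
by rewrite !cardsI_setU1 ?cardsI1 // !inE ?negb_or ?yx ?zx ?wx ?zy ?wy ?wz.
Qed.

End FinsetFacts.

(** * Edge and dual graphs *)

Section Complexes.
Variable V : finType.
Implicit Types (S : {set {set V}}) (s t tri : {set V}) (x y : V).

Lemma is_edgeP S x y :
  reflect (exists2 tri, tri \in S & (x \in tri) && (y \in tri)) (is_edge S x y).
Proof. exact: (iffP exists_inP) => -[tri]; exists tri. Qed.

Lemma is_edge_intro S tri x y : tri \in S -> x \in tri -> y \in tri -> is_edge S x y.
Proof. by move=> triS xtri ytri; apply/is_edgeP; exists tri; rewrite ?xtri. Qed.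

Lemma is_edge_sym S x y : is_edge S x y = is_edge S y x.
Proof. by apply/is_edgeP/is_edgeP => -[tri ? h]; exists tri; rewrite // andbC. Qed.

Lemma dual_adj_sym s t : dual_adj s t = dual_adj t s.
Proof. by rewrite /dual_adj setIC. Qed.

Lemma dual_adjE s t : #|s| = 4 -> #|t| = 4 -> s != t -> dual_adj s t = (2 < #|s :&: t|).
Proof.
move=> cs ct st; rewrite /dual_adj; apply/eqP/idP => [->//|gt2].
apply/eqP; rewrite eqn_leq gt2 andbT leqNgt; apply: contra st => gt3.
have es : s :&: t = s by apply: eq_subset_card; rewrite ?subsetIl // cs.
have et : s :&: t = t by apply: eq_subset_card; rewrite ?subsetIr // ct.
by rewrite -es et.
Qed.

Lemma dual_adj_set4 t p1 p2 p3 p4 : #|t| = 4 ->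
  p1 != p2 -> p1 != p3 -> p1 != p4 -> p2 != p3 -> p2 != p4 -> p3 != p4 ->
  t != [set p1; p2; p3; p4] ->
  dual_adj t [set p1; p2; p3; p4] = (2 < (p1 \in t) + (p2 \in t) + (p3 \in t) + (p4 \in t)).
Proof. by move=> ct n12 n13 n14 n23 n24 n34 ne; rewrite dual_adjE ?cards4 ?cardsI_set4. Qed.

Lemma sbar_tet_card S t : t \in sbar_tets S -> #|t| = 4.
Proof. by rewrite inE => /andP[/eqP]. Qed.

Lemma sbar_tet_edge S t x y : t \in sbar_tets S -> x \in t -> y \in t -> x != y ->
  is_edge S x y.
Proof.
rewrite inE => /andP[_ /forallP clique] xt yt xy.
by move: (clique x); rewrite xt => /forallP /(_ y); rewrite yt xy.
Qed.

Lemma set4_in_sbar_tets S p1 p2 p3 p4 :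
  p1 != p2 -> p1 != p3 -> p1 != p4 -> p2 != p3 -> p2 != p4 -> p3 != p4 ->
  is_edge S p1 p2 -> is_edge S p1 p3 -> is_edge S p1 p4 ->
  is_edge S p2 p3 -> is_edge S p2 p4 -> is_edge S p3 p4 ->
  [set p1; p2; p3; p4] \in sbar_tets S.
Proof.
move=> n12 n13 n14 n23 n24 n34 e12 e13 e14 e23 e24 e34.
rewrite inE cards4 //=; apply/forallP => u; apply/implyP.
rewrite !inE -!orbA => /or4P[]/eqP->; apply/forallP => w; apply/implyP;
  rewrite !inE -!orbA => /or4P[]/eqP->; rewrite ?eqxx //=;
  by apply/implyP => _; rewrite // is_edge_sym.
Qed.

Lemma in_flip S a b c d tri : (tri \in flip S a b c d) =
  [|| tri == [set a; c; d], tri == [set b; c; d] |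
      [&& tri != [set a; b; c], tri != [set a; b; d] & tri \in S]].
Proof. by rewrite /flip !inE -orbA; case: (tri == [set a; b; c]); rewrite ?andbF. Qed.

Lemma acd_in_flip S a b c d : [set a; c; d] \in flip S a b c d.
Proof. by rewrite in_flip eqxx. Qed.

Lemma bcd_in_flip S a b c d : [set b; c; d] \in flip S a b c d.
Proof. by rewrite in_flip eqxx orbT. Qed.

End Complexes.

Section Connect.
Variable T : finType.
Implicit Types (G : {set T}).

Lemma connect_homo (e e' : rel T) (h : T -> T) :
  (forall x y, e x y -> connect e' (h x) (h y)) ->
  forall x y, connect e x y -> connect e' (h x) (h y).
Proof.
move=> eh x y /connectP[p pth ->]; elim: p x pth => [|z p IHp] x /=.
  by rewrite connect0.
by case/andP => exz pth; apply: connect_trans (eh _ _ exz) (IHp _ pth).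
Qed.

Lemma connect_restrict (e e' : rel T) G :
  (forall u v, u \in G -> e u v -> v \in G) -> subrel e e' ->
  forall u v, u \in G -> connect e u v ->
  connect (fun s t => [&& s \in G, t \in G & e' s t]) u v.
Proof.
move=> closedG ee' u v uG /connectP[p pth ->].
elim: p u uG pth => [|z p IHp] u uG /=; first by rewrite connect0.
case/andP => euz pth; have zG := closedG _ _ uG euz.
by apply: connect_trans (IHp _ zG pth); apply: connect1; rewrite uG zG ee'.
Qed.

End Connect.

(** * Stacked balls *)

Section StackedBall.
Variable W : finType.
Implicit Types (B : {set {set W}}) (t s tri K : {set W}) (x y z p q r v : W).

Lemma boundary_card B tri : tri \in boundary B -> #|tri| = 3.
Proof. by rewrite inE => /andP[/eqP]. Qed.

Lemma boundary_sub_tet B tri : tri \in boundary B -> exists2 t, t \in B & tri \subset t.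
Proof.
rewrite inE => /andP[_ /eqP one]; have : 0 < #|[set s in B | tri \subset s]| by rewrite one.
by case/card_gt0P => t; rewrite inE => /andP[]; exists t.
Qed.

Lemma boundary_tet_uniq B tri t1 t2 : tri \in boundary B -> t1 \in B -> t2 \in B ->
  tri \subset t1 -> tri \subset t2 -> t1 = t2.
Proof.
rewrite inE => /andP[_ /cards1P[u hu]] t1B t2B s1 s2.
have : t1 \in [set s in B | tri \subset s] by rewrite inE t1B s1.
have : t2 \in [set s in B | tri \subset s] by rewrite inE t2B s2.
by rewrite hu !inE => /eqP -> /eqP ->.
Qed.

Lemma boundary1 t tri : (tri \in boundary [set t]) = (#|tri| == 3) && (tri \subset t).
Proof.
rewrite inE (_ : [set s in [set t] | tri \subset s] = if tri \subset t then [set t] else set0).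
  by case: ifP; rewrite ?cards1 ?cards0 ?andbT ?andbF.
by apply/setP => s; case: ifP => h; rewrite !inE; case: (s =P t) => [->|]; rewrite ?h.
Qed.

Section Step.
Variables (B : {set {set W}}) (tri : {set W}) (v : W).
Hypothesis tri_bd : tri \in boundary B.
Hypothesis v_fresh : forall s, s \in B -> v \notin s.

Lemma apex_notin_boundary T : T \in boundary B -> v \notin T.
Proof.
by case/boundary_sub_tet => t tB /subsetP sub; apply/negP => /sub; apply/negP/v_fresh.
Qed.

Lemma apex_notin_tri : v \notin tri.
Proof. exact: apex_notin_boundary tri_bd. Qed.

Lemma card_apex_tet : #|v |: tri| = 4.
Proof. by rewrite cardsU1 apex_notin_tri (boundary_card tri_bd). Qed.

Lemma apex_tet_notin : v |: tri \notin B.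
Proof. by apply/negP => /v_fresh; rewrite setU11. Qed.

Lemma is_edge_step x y : is_edge ((v |: tri) |: B) x y =
  is_edge B x y || ((x \in v |: tri) && (y \in v |: tri)).
Proof.
apply/is_edgeP/orP => [[t]|[/is_edgeP[t tB h]|h]].
- rewrite [t \in _]in_setU1 => /orP[/eqP->|tB] h; [right|left; apply/is_edgeP; exists t] => //.
- by exists t; rewrite // in_setU1 tB orbT.
- by exists (v |: tri); rewrite // setU11.
Qed.

Lemma is_edge_apex y : is_edge ((v |: tri) |: B) v y -> y \in v |: tri.
Proof.
rewrite is_edge_step => /orP[/is_edgeP[t tB /andP[vt _]]|/andP[]//].
by move: (v_fresh tB); rewrite vt.
Qed.

Lemma is_edge_step_old x y : x != v -> y != v ->
  is_edge ((v |: tri) |: B) x y -> is_edge B x y.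
Proof.
move=> xv yv; rewrite is_edge_step => /orP[//|/andP[]].
rewrite !inE (negbTE xv) (negbTE yv) /= => xt yt.
case: (boundary_sub_tet tri_bd) => t tB sub.
by apply: (is_edge_intro tB); apply: (subsetP sub).
Qed.

Lemma boundary_step T : (T \in boundary ((v |: tri) |: B)) =
  ((T \in boundary B) && (T != tri)) || [&& #|T| == 3, v \in T & T \subset v |: tri].
Proof.
have eA : [set s in (v |: tri) |: B | T \subset s] = if T \subset v |: tri
    then (v |: tri) |: [set s in B | T \subset s] else [set s in B | T \subset s].
  apply/setP => s; case: ifP => h; rewrite !inE;
  by case: (s =P v |: tri) => [->|_] /=; rewrite ?eqxx ?h ?(negbTE apex_tet_notin).
rewrite [in LHS]inE eA; case: (boolP (v \in T)) => vT.
  rewrite [T \in boundary B]inE; have -> : [set s in B | T \subset s] = set0.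
    apply/setP => s; rewrite !inE; apply/negP => /andP[sB sub].
    by move: (v_fresh sB); rewrite (subsetP sub _ vT).
  rewrite cards0 andbF /=.
  by case: ifP => h; rewrite ?cardsU1 ?inE ?cards0 /= ?andbF ?andbT.
rewrite /= andbF orbF; case: ifP => h; last first.
  case: (T =P tri) => [eT|_]; first by move: h; rewrite eT subsetUr.
  by rewrite [T \in boundary B]inE andbT.
have Ttri : T \subset tri.
  apply/subsetP => u uT; move: (subsetP h u uT); rewrite in_setU1 => /orP[/eqP ue|//].
  by move: vT; rewrite -ue uT.
rewrite cardsU1 inE (negbTE apex_tet_notin) /=.
case: (boolP (#|T| == 3)) => [/eqP c3|c3]; last by rewrite inE (negbTE c3).
have -> : T = tri by apply: eq_subset_card; rewrite ?(boundary_card tri_bd) ?c3.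
by rewrite eqxx andbF; move: tri_bd; rewrite inE => /andP[_ /eqP ->].
Qed.

End Step.

Lemma stacked_ball_card B : stacked_ball B -> forall t, t \in B -> #|t| = 4.
Proof.
elim=> [t0 c4 t|B' tri v _ IH tri_bd v_fresh t]; first by rewrite inE => /eqP->.
by rewrite in_setU1 => /orP[/eqP->|/IH//]; apply: card_apex_tet tri_bd v_fresh.
Qed.

Lemma stacked_ball_boundary_edge B : stacked_ball B ->
  forall x y, is_edge (boundary B) x y = is_edge B x y.
Proof.
elim=> [t0 c4|B0 tri v _ IH tri_bd v_fresh] x y.
  apply/is_edgeP/is_edgeP => [[T]|[t]].
    rewrite boundary1 => /andP[_ sub] /andP[xT yT]; exists t0; rewrite ?inE //.
    by rewrite (subsetP sub _ xT) (subsetP sub _ yT).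
  rewrite inE => /eqP -> /andP[xt yt].
  have [w [wt wx wy]] : exists w, [/\ w \in t0, w != x & w != y].
    by apply: exists_avoid2; rewrite c4.
  exists (t0 :\ w); last by rewrite !inE eq_sym wx xt eq_sym wy yt.
  by rewrite boundary1 subD1set andbT cardsD1_in ?c4.
have apex_edge : x \in v |: tri -> y \in v |: tri ->
    is_edge (boundary ((v |: tri) |: B0)) x y.
  move=> xn yn; have [w [wt wx wy]] : exists w, [/\ w \in tri, w != x & w != y].
    by apply: exists_avoid2; rewrite (boundary_card tri_bd).
  apply/is_edgeP; exists ((v |: tri) :\ w); last first.
    by rewrite !in_setD1 xn yn (eq_sym x) wx (eq_sym y) wy.
  rewrite boundary_step //; apply/orP; right; apply/and3P; split; last exact: subD1set.
    by rewrite cardsD1_in ?(card_apex_tet tri_bd v_fresh) // in_setU1 wt orbT.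
  by rewrite in_setD1 setU11 andbT; apply: contraNneq (apex_notin_tri tri_bd v_fresh) => ->.
apply/idP/idP.
  case/is_edgeP => T; rewrite boundary_step //.
  case/orP => [/andP[TB _] xyT|/and3P[_ _ sub] /andP[xT yT]].
    by rewrite is_edge_step -IH (is_edge_intro TB) ?(andP xyT).1 ?(andP xyT).2.
  by rewrite is_edge_step (subsetP sub _ xT) (subsetP sub _ yT) orbT.
rewrite is_edge_step -IH => /orP[/is_edgeP[T TB xyT]|/andP[]]; last exact: apex_edge.
case: (T =P tri) => [eT|/eqP nT].
  by case/andP: xyT; rewrite eT => xt yt; apply: apex_edge; rewrite in_setU1 ?xt ?yt orbT.
by apply/is_edgeP; exists T; rewrite // boundary_step // TB nT.
Qed.

Lemma stacked_ball_clique B : stacked_ball B -> forall K, 1 < #|K| ->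
  (forall x y, x \in K -> y \in K -> x != y -> is_edge B x y) ->
  exists2 t, t \in B & K \subset t.
Proof.
elim=> [t0 _|B0 tri v _ IH tri_bd v_fresh] K gt1 clique.
  exists t0; rewrite ?inE //; apply/subsetP => x xK.
  case: (exists_avoid1 x gt1) => y yK yx.
  by case/is_edgeP: (clique _ _ yK xK yx) => t; rewrite inE => /eqP-> /andP[_ ->].
case: (boolP (v \in K)) => vK.
  exists (v |: tri); first exact: setU11.
  apply/subsetP => x xK; case: (x =P v) => [->|/eqP xv]; first exact: setU11.
  by apply: (is_edge_apex v_fresh); apply: clique; rewrite // eq_sym.
case: (IH K gt1) => [x y xK yK xy|t tB sub]; last by exists t; rewrite // in_setU1 tB orbT.
by apply: (is_edge_step_old tri_bd _ _ (clique _ _ xK yK xy)); apply: contraNneq vK => <-.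
Qed.

Lemma stacked_ball_square_chord B : stacked_ball B -> forall p q r z,
  is_edge B p q -> is_edge B q r -> is_edge B r z -> is_edge B z p ->
  p != r -> q != z -> is_edge B p r || is_edge B q z.
Proof.
elim=> [t0 _|B0 tri v _ IH tri_bd v_fresh] p q r z epq eqr erz ezp pr qz.
  case/is_edgeP: epq => t; rewrite inE => /eqP-> /andP[pt _].
  case/is_edgeP: eqr => t'; rewrite inE => /eqP-> /andP[_ rt].
  by rewrite (is_edge_intro (set11 t0) pt rt).
set N := (v |: tri) |: B0.
have apex_chord x y : is_edge N x v -> is_edge N v y -> is_edge N x y.
  rewrite is_edge_sym => /(is_edge_apex v_fresh) xn /(is_edge_apex v_fresh) yn.
  by rewrite is_edge_step xn yn orbT.
case: (eqVneq p v) => [pv|pv].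
  by apply/orP; right; rewrite is_edge_sym; apply: apex_chord; rewrite -pv.
case: (eqVneq q v) => [qv|qv]; first by apply/orP; left; apply: apex_chord; rewrite -qv.
case: (eqVneq r v) => [rv|rv]; first by apply/orP; right; apply: apex_chord; rewrite -rv.
case: (eqVneq z v) => [zv|zv].
  by apply/orP; left; rewrite is_edge_sym; apply: apex_chord; rewrite -zv.
have old := is_edge_step_old (v := v) tri_bd.
case/orP: (IH p q r z (old _ _ pv qv epq) (old _ _ qv rv eqr) (old _ _ rv zv erz)
  (old _ _ zv pv ezp) pr qz) => e; by rewrite !is_edge_step e ?orbT.
Qed.

Lemma stacked_ball_edge_triangles B : stacked_ball B -> forall x y T1 T2 T3, x != y ->
  T1 \in boundary B -> T2 \in boundary B -> T3 \in boundary B ->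
  x \in T1 -> y \in T1 -> x \in T2 -> y \in T2 -> x \in T3 -> y \in T3 ->
  [\/ T1 = T2, T1 = T3 | T2 = T3].
Proof.
elim=> [t0 c4|B0 tri v _ IH tri_bd v_fresh] x y T1 T2 T3 xy.
  rewrite !boundary1 => /andP[/eqP c1 s1] /andP[/eqP c2 s2] /andP[/eqP c3 s3].
  exact: card3_subsets_through_pair c4 xy s1 s2 s3 c1 c2 c3.
have bd T : T \in boundary ((v |: tri) |: B0) ->
    (T \in boundary B0 /\ T != tri) \/ [/\ #|T| = 3, v \in T & T \subset v |: tri].
  by rewrite boundary_step // => /orP[/andP[]|/and3P[/eqP]]; [left|right].
move=> b1 b2 b3 x1 y1 x2 y2 x3 y3.
case: (boolP ((x == v) || (y == v))) => [xyv|].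
  have apex T : T \in boundary ((v |: tri) |: B0) -> x \in T -> y \in T ->
      T \subset v |: tri /\ #|T| = 3.
    move=> bT xT yT; case: (bd T bT) => [[oT _]|[cT _ sT]] //.
    by move: (apex_notin_boundary v_fresh oT); case/orP: xyv => /eqP <-; rewrite ?xT ?yT.
  case: (apex _ b1 x1 y1) (apex _ b2 x2 y2) (apex _ b3 x3 y3) => s1 c1 [s2 c2] [s3 c3].
  exact: (card3_subsets_through_pair (card_apex_tet tri_bd v_fresh) xy
    s1 s2 s3 c1 c2 c3 x1 y1 x2 y2 x3 y3).
rewrite negb_or => /andP[xv yv].
have apex_eq (Ta Tb : {set W}) : #|Ta| = 3 -> #|Tb| = 3 -> v \in Ta -> v \in Tb ->
    x \in Ta -> y \in Ta -> x \in Tb -> y \in Tb -> Ta = Tb.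
  have xyvE (T : {set W}) : #|T| = 3 -> v \in T -> x \in T -> y \in T -> T = [set x; y; v].
    move=> cT vT xT yT; symmetry; apply: eq_subset_card; last by rewrite cT cards3.
    by apply/subsetP => u; rewrite !inE => /orP[/orP[]|] /eqP->.
  by move=> ca cb va vb xa ya xb yb; rewrite (xyvE Ta) // (xyvE Tb).
have old_eq (Tn Ta Tb : {set W}) : Tn \subset v |: tri -> x \in Tn -> y \in Tn ->
    Ta \in boundary B0 -> Ta != tri -> Tb \in boundary B0 -> Tb != tri ->
    x \in Ta -> y \in Ta -> x \in Tb -> y \in Tb -> Ta = Tb.
  move=> sn xn yn ba na bb nb xa ya xb yb.
  have xt : x \in tri by move: (subsetP sn _ xn); rewrite in_setU1 (negbTE xv).
  have yt : y \in tri by move: (subsetP sn _ yn); rewrite in_setU1 (negbTE yv).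
  case: (IH x y tri Ta Tb xy tri_bd ba bb xt yt xa ya xb yb) => // e.
    by move: na; rewrite -e eqxx.
  by move: nb; rewrite -e eqxx.
case: (bd _ b1) => [[o1 n1]|[c1 v1 s1]]; case: (bd _ b2) => [[o2 n2]|[c2 v2 s2]];
  case: (bd _ b3) => [[o3 n3]|[c3 v3 s3]].
- exact: IH x y T1 T2 T3 xy o1 o2 o3 x1 y1 x2 y2 x3 y3.
- by constructor 1; apply: (old_eq T3).
- by constructor 2; apply: (old_eq T2).
- by constructor 3; apply: apex_eq.
- by constructor 3; apply: (old_eq T1).
- by constructor 2; apply: apex_eq.
- by constructor 1; apply: apex_eq.
- by constructor 1; apply: apex_eq.
Qed.

Lemma stacked_ball_triangle_tets B : stacked_ball B -> forall t1 t2 t3 K,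
  t1 \in B -> t2 \in B -> t3 \in B -> t1 != t2 -> t1 != t3 -> t2 != t3 ->
  #|K| = 3 -> K \subset t1 -> K \subset t2 -> K \subset t3 -> False.
Proof.
elim=> [t0 _|B0 tri v _ IH tri_bd v_fresh] t1 t2 t3 K.
  by rewrite !inE => /eqP-> /eqP-> _; rewrite eqxx.
have apex_old s1 s2 : s1 \in B0 -> s2 \in B0 -> #|K| = 3 -> K \subset v |: tri ->
    K \subset s1 -> K \subset s2 -> s1 = s2.
  move=> b1 b2 cK sK k1 k2.
  have Ktri : K \subset tri.
    apply/subsetP => u uK; move: (subsetP sK _ uK); rewrite in_setU1 => /orP[/eqP e|//].
    by move: (v_fresh _ b1); rewrite -e (subsetP k1 _ uK).
  have eK : K = tri by apply: eq_subset_card; rewrite // cK (boundary_card tri_bd).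
  by apply: (boundary_tet_uniq tri_bd); rewrite // -eK.
rewrite !in_setU1 => /orP[/eqP e1|b1] /orP[/eqP e2|b2] /orP[/eqP e3|b3] n12 n13 n23 cK k1 k2 k3.
- by move: n12; rewrite e1 e2 eqxx.
- by move: n12; rewrite e1 e2 eqxx.
- by move: n13; rewrite e1 e3 eqxx.
- by move/eqP: n23; apply; apply: apex_old; rewrite // -e1.
- by move: n23; rewrite e2 e3 eqxx.
- by move/eqP: n13; apply; apply: apex_old; rewrite // -e2.
- by move/eqP: n12; apply; apply: apex_old; rewrite // -e3.
- exact: IH t1 t2 t3 K b1 b2 b3 n12 n13 n23 cK k1 k2 k3.
Qed.

(* A cycle through the new tetrahedron would leave it through two distinct
   neighbours, both glued along its only old face [tri]. *)
Lemma stacked_ball_dual_acyclic B : stacked_ball B -> forall c : seq {set W},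
  all (fun s => s \in B) c -> 2 < size c -> uniq c -> cycle (@dual_adj W) c -> False.
Proof.
elim=> [t0 _|B0 tri v _ IH tri_bd v_fresh] c.
  case: c => [|s1 [|s2 c]] //= /and3P[s1B s2B _] _ /andP[s12 _] _.
  by move: s12 s1B s2B; rewrite !inE => s12 /eqP e1 /eqP e2; rewrite e1 e2 eqxx in s12.
set N := v |: tri => cB gt2 uc cc.
case: (boolP (N \in c)) => Nc; last first.
  apply: (IH c) => //; apply/allP => s sc; move: (allP cB s sc).
  by rewrite in_setU1 => /orP[/eqP e|//]; move: Nc; rewrite -e sc.
have glued s : s \in N |: B0 -> s != N -> dual_adj N s -> tri \subset s.
  rewrite in_setU1 => /orP[/eqP->|sB0 _]; first by rewrite eqxx.
  rewrite /dual_adj => /eqP c3.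
  have sub : N :&: s \subset tri.
    apply/subsetP => u; rewrite inE in_setU1 => /andP[/orP[/eqP->|//] vs].
    by move: (v_fresh _ sB0); rewrite vs.
  have <- : N :&: s = tri by apply: eq_subset_card; rewrite // c3 (boundary_card tri_bd).
  exact: subsetIr.
case: (rot_to Nc) => i c' ec.
have : uniq (N :: c') by rewrite -ec rot_uniq.
have : cycle (@dual_adj W) (N :: c') by rewrite -ec rot_cycle.
have : all (fun s => s \in N |: B0) (N :: c').
  by apply/allP => s; rewrite -ec mem_rot; apply: (allP cB).
have : 2 < size (N :: c') by rewrite -ec size_rot.
case: c' {ec} => [|y c''] //; case/lastP: c'' => [|c3 z] //= _.
move=> /and3P[_ yB /allP zB] /andP[Ny]; rewrite rcons_path last_rcons => /andP[_ zN].
rewrite inE !mem_rcons !inE !negb_or => /and3P[/and3P[Ny' Nz _] /andP[yz _] _].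
have zB' : z \in N |: B0 by apply: zB; rewrite mem_rcons inE eqxx.
have ty : tri \subset y by apply: glued; rewrite // eq_sym.
have tz : tri \subset z by apply: glued => //; [rewrite eq_sym | rewrite dual_adj_sym].
move: yB zB'; rewrite !in_setU1 (eq_sym y) (negbTE Ny') (eq_sym z) (negbTE Nz) /= => yB zB'.
by move/eqP: yz; apply; apply: (boundary_tet_uniq tri_bd).
Qed.

End StackedBall.

(** * Stacked spheres *)

Section Transport.
Variables (V W : finType) (f : V -> W).
Hypothesis f_inj : injective f.
Variables (S : {set {set V}}) (B : {set {set W}}).
Hypothesis B_ball : stacked_ball B.
Hypothesis S_boundary : boundary B = [set f @: (tri : {set V}) | tri in S].

Lemma imset_subsetE (s t : {set V}) : (f @: s \subset f @: t) = (s \subset t).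
Proof.
apply/idP/idP => [/subsetP sub|]; last exact: imsetS.
by apply/subsetP => x xs; rewrite -(mem_imset _ _ f_inj) sub ?mem_imset.
Qed.

Lemma imset_boundaryE (tri : {set V}) : (f @: tri \in boundary B) = (tri \in S).
Proof. by rewrite S_boundary (mem_imset _ _ (imset_inj f_inj)). Qed.

Lemma is_edge_imsetE x y : is_edge S x y = is_edge B (f x) (f y).
Proof.
rewrite -(stacked_ball_boundary_edge B_ball); apply/is_edgeP/is_edgeP => [[T TS xyT]|[T]].
  by exists (f @: T); rewrite ?imset_boundaryE // !(mem_imset _ _ f_inj).
by rewrite S_boundary => /imsetP[T0 T0S ->]; rewrite !(mem_imset _ _ f_inj); exists T0.
Qed.

Lemma sbar_tets_imsetE (t : {set V}) : (t \in sbar_tets S) = (f @: t \in B).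
Proof.
apply/idP/idP => [tS|tB].
  have [t' t'B sub] : exists2 t', t' \in B & f @: t \subset t'.
    apply: (stacked_ball_clique B_ball); first by rewrite card_imset ?(sbar_tet_card tS).
    move=> _ _ /imsetP[x xt ->] /imsetP[y yt ->] fxy.
    by rewrite -is_edge_imsetE (sbar_tet_edge tS) //; apply: contraNneq fxy => ->.
  suff -> : f @: t = t' by [].
  apply: eq_subset_card; rewrite // (stacked_ball_card B_ball t'B).
  by rewrite card_imset ?(sbar_tet_card tS).
rewrite inE -(card_imset _ f_inj) (stacked_ball_card B_ball tB) eqxx /=.
apply/forallP => x; apply/implyP => xt; apply/forallP => y; apply/implyP => yt.
apply/implyP => _; rewrite is_edge_imsetE.
by apply: (is_edge_intro tB); rewrite mem_imset.
Qed.

End Transport.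

Section StackedSphere.
Variables (V : finType) (S : {set {set V}}).
Hypothesis S_stacked : stacked_sphere S.
Implicit Types (t s K tri : {set V}) (x y p q r z : V).

Lemma sphere_triangle_card tri : tri \in S -> #|tri| = 3.
Proof.
case: S_stacked => W [f [f_inj [B [_ bdB]]]].
by rewrite -(imset_boundaryE f_inj bdB) => /boundary_card; rewrite card_imset.
Qed.

Lemma sphere_square_chord p q r z :
  is_edge S p q -> is_edge S q r -> is_edge S r z -> is_edge S z p ->
  p != r -> q != z -> is_edge S p r || is_edge S q z.
Proof.
case: S_stacked => W [f [f_inj [B [ball bdB]]]].
rewrite !(is_edge_imsetE f_inj ball bdB) => epq eqr erz ezp pr qz.
by apply: (stacked_ball_square_chord ball epq eqr erz ezp); rewrite (inj_eq f_inj).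
Qed.

Lemma sphere_clique_card K : (forall x y, x \in K -> y \in K -> x != y -> is_edge S x y) ->
  #|K| <= 4.
Proof.
case: S_stacked => W [f [f_inj [B [ball bdB]]]] clique; rewrite leqNgt; apply/negP => gt4.
case: (stacked_ball_clique ball (K := f @: K)).
- by rewrite card_imset // (leq_trans _ gt4).
- move=> _ _ /imsetP[x xK ->] /imsetP[y yK ->] fxy.
  by rewrite -(is_edge_imsetE f_inj ball bdB) clique //; apply: contraNneq fxy => ->.
- move=> t tB /subset_leq_card; rewrite card_imset // (stacked_ball_card ball tB).
  by rewrite leqNgt gt4.
Qed.

Lemma sphere_edge_triangles x y T1 T2 T3 : x != y -> T1 \in S -> T2 \in S -> T3 \in S ->
  x \in T1 -> y \in T1 -> x \in T2 -> y \in T2 -> x \in T3 -> y \in T3 ->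
  [\/ T1 = T2, T1 = T3 | T2 = T3].
Proof.
case: S_stacked => W [f [f_inj [B [ball bdB]]]].
rewrite -!(imset_boundaryE f_inj bdB) -!(mem_imset _ _ f_inj) -(inj_eq f_inj).
move=> xy b1 b2 b3 x1 y1 x2 y2 x3 y3.
have [] := stacked_ball_edge_triangles ball xy b1 b2 b3 x1 y1 x2 y2 x3 y3;
  move/(imset_inj f_inj) => ->; by [constructor 1|constructor 2|constructor 3].
Qed.

Lemma sphere_triangle_tet_uniq tri t1 t2 : tri \in S -> t1 \in sbar_tets S ->
  t2 \in sbar_tets S -> tri \subset t1 -> tri \subset t2 -> t1 = t2.
Proof.
case: S_stacked => W [f [f_inj [B [ball bdB]]]].
rewrite -(imset_boundaryE f_inj bdB) !(sbar_tets_imsetE f_inj ball bdB).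
rewrite -!(imset_subsetE f_inj) => b t1B t2B s1 s2.
exact: (imset_inj f_inj) (boundary_tet_uniq b t1B t2B s1 s2).
Qed.

Lemma sphere_triangle_tets t1 t2 t3 K : t1 \in sbar_tets S -> t2 \in sbar_tets S ->
  t3 \in sbar_tets S -> t1 != t2 -> t1 != t3 -> t2 != t3 -> #|K| = 3 ->
  K \subset t1 -> K \subset t2 -> K \subset t3 -> False.
Proof.
case: S_stacked => W [f [f_inj [B [ball bdB]]]].
rewrite !(sbar_tets_imsetE f_inj ball bdB) -!(imset_subsetE f_inj) -(card_imset _ f_inj).
rewrite -!(inj_eq (imset_inj f_inj)); exact: stacked_ball_triangle_tets.
Qed.

Lemma sphere_dual_acyclic (c : seq {set V}) : all (fun s => s \in sbar_tets S) c ->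
  2 < size c -> uniq c -> cycle (@dual_adj V) c -> False.
Proof.
case: S_stacked => W [f [f_inj [B [ball bdB]]]] cS gt2 uc cc.
apply: (stacked_ball_dual_acyclic ball (c := [seq f @: s | s <- c])).
- by apply/allP => _ /mapP[s sc ->]; rewrite -(sbar_tets_imsetE f_inj ball bdB) (allP cS).
- by rewrite size_map.
- by rewrite (map_inj_uniq (imset_inj f_inj)).
rewrite cycle_map; apply: sub_cycle cc => s t.
by rewrite /dual_adj /= -imsetI ?card_imset //; move=> ? ? _ _; apply: f_inj.
Qed.

(* A neighbour [s] of [t] meets it in a face [t :\ w]; since [tri] lies in no
   other tetrahedron, [w] is a vertex of [tri], and distinct neighbours give
   distinct faces. *)
Lemma sphere_tet_on_triangle_deg t tri : t \in sbar_tets S -> tri \in S -> tri \subset t ->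
  dual_deg (sbar_tets S) t <= 3.
Proof.
move=> tS triS sub; set N := [set s in sbar_tets S | dual_adj t s].
have nbr s : s \in N -> [/\ s \in sbar_tets S, t != s & #|t :&: s| = 3].
  rewrite inE => /andP[sS /eqP c3]; split => //; apply: contra_eqN c3 => /eqP <-.
  by rewrite setIid (sbar_tet_card tS).
have face s : s \in N -> t :&: s \in [set t :\ w | w in tri].
  case/nbr => sS ts c3; have [w] := card3_subset_card4 (sbar_tet_card tS) (subsetIl t s) c3.
  rewrite inE => /andP[wts _] ets; rewrite ets; apply/imsetP; exists w => //.
  apply/negPn/negP => wtri.
  have st : s = t.
    apply: (sphere_triangle_tet_uniq triS sS tS _ sub); apply: subset_trans (subsetIr t s).
    rewrite ets; apply/subsetP => u utri; rewrite in_setD1 (subsetP sub _ utri) andbT.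
    by apply: contraNneq wtri => <-.
  by move: ts; rewrite st eqxx.
have face_inj : {in N &, injective (fun s => t :&: s)}.
  move=> s1 s2 /nbr[s1S ts1 c1] /nbr[s2S ts2 _] e12; apply/eqP/negPn/negP => n12.
  apply: (sphere_triangle_tets tS s1S s2S ts1 ts2 n12 c1 (subsetIl _ _) (subsetIr _ _)).
  by rewrite e12 subsetIr.
rewrite /dual_deg -/N -(card_in_imset face_inj) -(sphere_triangle_card triS).
apply: leq_trans (leq_imset_card (fun w => t :\ w) tri).
by apply: subset_leq_card; apply/subsetP => _ /imsetP[s sN ->]; apply: face.
Qed.

End StackedSphere.

Section DualComponents.
Variables (V : finType) (C : {set {set V}}) (sigma : {set V}).
Local Notation R := (dual_adj_minus C sigma).

Definition comp_minus s := [set t in C :\ sigma | connect R s t].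

Lemma comps_minusE : comps_minus C sigma = [set comp_minus s | s in C :\ sigma].
Proof. by []. Qed.

Lemma mem_comp_minus s t : (t \in comp_minus s) = [&& t != sigma, t \in C & connect R s t].
Proof. by rewrite in_set in_setD1 andbA. Qed.

Lemma dual_adj_minus_sym : symmetric R.
Proof.
move=> s t; rewrite /dual_adj_minus dual_adj_sym.
by case: (s \in C); case: (t \in C); case: (s != sigma); case: (t != sigma).
Qed.

Lemma connect_minus_sym s t : connect R s t = connect R t s.
Proof. exact: (sym_connect_sym dual_adj_minus_sym). Qed.

Lemma comp_minus_eq s t : connect R s t -> comp_minus s = comp_minus t.
Proof.
move=> st; apply/setP => u; rewrite !in_set.
by rewrite (same_connect (sym_connect_sym dual_adj_minus_sym) st).
Qed.

End DualComponents.

Lemma comp_minus_dual_tree V (S : {set {set V}}) sigma s : stacked_sphere S ->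
  s \in sbar_tets S :\ sigma -> dual_tree (comp_minus (sbar_tets S) sigma s).
Proof.
move=> S_stacked sC; set G := comp_minus _ sigma s.
have sG : s \in G by rewrite inE sC connect0.
split; [by apply/set0Pn; exists s | split].
  pose RG := fun u v => [&& u \in G, v \in G & dual_adj u v].
  have from_s v : v \in G -> connect RG s v.
    rewrite mem_comp_minus => /and3P[_ _ sv].
    apply: connect_restrict sG sv => [u w|u w /and5P[] //].
    rewrite !mem_comp_minus => /and3P[_ _ su] uw; move: (uw) => /and5P[_ wC _ ws _].
    by rewrite ws wC (connect_trans su (connect1 uw)).
  have RG_sym : symmetric RG by move=> u v; rewrite /RG dual_adj_sym andbCA.
  move=> u v uG vG; apply: connect_trans (from_s v vG).
  by rewrite (sym_connect_sym RG_sym) from_s.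
case=> cyc /and3P[cycG gt2 /andP[cc uc]].
apply: (sphere_dual_acyclic S_stacked _ gt2 uc cc); apply/allP => t tc.
by move: (allP cycG t tc); rewrite mem_comp_minus => /and3P[].
Qed.

(** * The edge flip *)

Section Flip.
Variables (V : finType) (S : {set {set V}}) (a b c d : V).
Hypotheses (S_stacked : stacked_sphere S) (abcS : [set a; b; c] \in S)
  (abdS : [set a; b; d] \in S) (cd : c != d) (cd_nonedge : ~~ is_edge S c d)
  (T_stacked : stacked_sphere (flip S a b c d)).
Local Notation T := (flip S a b c d).
Implicit Types (t s : {set V}) (u w p : V).

Lemma abc_neq : [/\ a != b, a != c & b != c].
Proof. exact: cards3_neq (sphere_triangle_card S_stacked abcS). Qed.

Lemma abd_neq : [/\ a != b, a != d & b != d].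
Proof. exact: cards3_neq (sphere_triangle_card S_stacked abdS). Qed.

Lemma flip_edge_inv u w : is_edge T u w ->
  is_edge S u w || ((u \in [set c; d]) && (w \in [set c; d])).
Proof.
case/is_edgeP => tri; rewrite in_flip => /or3P[/eqP->|/eqP->|/and3P[_ _ triS]] /andP[ut wt];
  last by rewrite (is_edge_intro triS ut wt).
all: move: ut wt; rewrite !inE -!orbA => /or3P[]/eqP-> /or3P[]/eqP->;
  rewrite ?eqxx ?orbT //; apply/orP; left.
all: first [ by apply: (is_edge_intro abcS); rewrite !inE eqxx ?orbT
           | by apply: (is_edge_intro abdS); rewrite !inE eqxx ?orbT ].
Qed.

Lemma flip_edge_keep u w : is_edge S u w -> (u \notin [set a; b]) || (w \notin [set a; b]) ->
  is_edge T u w.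
Proof.
case/is_edgeP => tri triS /andP[ut wt] not_ab.
have new_edge : tri = [set a; b; c] \/ tri = [set a; b; d] -> is_edge T u w.
  move=> e; move: ut wt not_ab; case: e => ->; rewrite !inE -!orbA => /or3P[]/eqP-> /or3P[]/eqP->;
  rewrite ?eqxx ?orbT //= => _;
  first [ by apply: (is_edge_intro (acd_in_flip S a b c d)); rewrite !inE eqxx ?orbT
        | by apply: (is_edge_intro (bcd_in_flip S a b c d)); rewrite !inE eqxx ?orbT ].
case: (eqVneq tri [set a; b; c]) => [e|abc_tri]; first by apply: new_edge; left.
case: (eqVneq tri [set a; b; d]) => [e|abd_tri]; first by apply: new_edge; right.
by apply: (is_edge_intro (tri := tri)); rewrite // in_flip triS abc_tri abd_tri !orbT.
Qed.

Lemma flip_nonedge_ab : ~~ is_edge T a b.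
Proof.
have [ab ac bc] := abc_neq; have [_ ad bd] := abd_neq.
apply/negP => /is_edgeP[tri]; rewrite in_flip.
case/or3P => [/eqP->|/eqP->|/and3P[abc_tri abd_tri triS]] /andP[atri btri].
- by move: btri; rewrite !inE (eq_sym b a) (negbTE ab) (negbTE bc) (negbTE bd).
- by move: atri; rewrite !inE (negbTE ab) (negbTE ac) (negbTE ad).
have [aabc babc] : a \in [set a; b; c] /\ b \in [set a; b; c] by rewrite !inE !eqxx orbT.
have [aabd babd] : a \in [set a; b; d] /\ b \in [set a; b; d] by rewrite !inE !eqxx orbT.
have [abc_abd|e|e] := sphere_edge_triangles S_stacked ab abcS abdS triS
  aabc babc aabd babd atri btri.
- have : d \in [set a; b; c] by rewrite abc_abd !inE eqxx orbT.
  by rewrite !inE (eq_sym d a) (negbTE ad) (eq_sym d b) (negbTE bd) (eq_sym d) (negbTE cd).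
- by move: abc_tri; rewrite e eqxx.
- by move: abd_tri; rewrite e eqxx.
Qed.

(* The square [a w b p] of the edge graph of [T] has no chord [ab]. *)
Lemma flip_common_nbr w p : w \in [set c; d] -> p \notin [set c; d] -> w != p ->
  is_edge T b p -> is_edge T p a -> is_edge S w p.
Proof.
move=> wcd pcd wp bp pa; have [ab _ _] := abc_neq.
have [aw wb] : is_edge T a w /\ is_edge T w b.
  by move: wcd; rewrite !inE => /orP[]/eqP->; split;
    [ apply: (is_edge_intro (acd_in_flip S a b c d))
    | apply: (is_edge_intro (bcd_in_flip S a b c d))
    | apply: (is_edge_intro (acd_in_flip S a b c d))
    | apply: (is_edge_intro (bcd_in_flip S a b c d)) ]; rewrite !inE eqxx ?orbT.
case/orP: (sphere_square_chord T_stacked aw wb bp pa ab wp) => [|/flip_edge_inv].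
  by rewrite (negbTE flip_nonedge_ab).
by case/orP => // /andP[_]; rewrite (negbTE pcd).
Qed.

Section FourthVertex.
Variables (alpha beta : {set V}) (x : V).
Hypotheses (alphaC : alpha \in sbar_tets S) (abc_alpha : [set a; b; c] \subset alpha)
  (betaC : beta \in sbar_tets S) (abd_beta : [set a; b; d] \subset beta)
  (x_alpha : x \in alpha) (x_notin_abc : x \notin [set a; b; c]).

Lemma x_neq : [/\ x != a, x != b, x != c & x != d].
Proof.
move: x_notin_abc; rewrite !inE !negb_or => /andP[/andP[xa xb] xc]; split => //.
apply: contraNneq cd_nonedge => xd; rewrite -xd; apply: (sbar_tet_edge alphaC) => //.
  by apply: (subsetP abc_alpha); rewrite !inE eqxx !orbT.
by rewrite eq_sym.
Qed.

Lemma alphaE : alpha = [set a; b; c; x].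
Proof.
have [ab ac bc] := abc_neq; have [xa xb xc _] := x_neq.
symmetry; apply: eq_subset_card; last by rewrite (sbar_tet_card alphaC) cards4 // eq_sym.
apply/subsetP => u; rewrite !inE -!orbA => /or4P[]/eqP-> //;
  by apply: (subsetP abc_alpha); rewrite !inE eqxx ?orbT.
Qed.

Lemma alpha_edge u w : u \in [set a; b; c; x] -> w \in [set a; b; c; x] -> u != w ->
  is_edge S u w.
Proof. by rewrite -alphaE; apply: sbar_tet_edge. Qed.

Lemma flip_edge_x u : u \in [set a; b; c] -> is_edge T u x.
Proof.
have [xa xb xc _] := x_neq => uabc.
apply: flip_edge_keep; last by rewrite !inE !negb_or xa xb orbT.
apply: alpha_edge; last by apply: contraNneq x_notin_abc => <-.
  by move: uabc; rewrite !inE -orbA => /or3P[] ->; rewrite ?orbT.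
by rewrite !inE eqxx orbT.
Qed.

Lemma edge_dx : is_edge S d x.
Proof.
have [xa xb xc xd] := x_neq.
apply: flip_common_nbr; rewrite ?inE ?eqxx ?orbT ?negb_or ?xc ?xd 1?eq_sym //.
  by apply: flip_edge_x; rewrite !inE eqxx orbT.
by rewrite is_edge_sym; apply: flip_edge_x; rewrite !inE eqxx.
Qed.

(* Otherwise either [p |: alpha] is a 5-clique, or the square [x c p d] has no
   chord. *)
Lemma common_nbr_abcd p : is_edge S p a -> is_edge S p b -> is_edge S p c -> is_edge S p d ->
  p \notin [set a; b; c; d] -> p = x.
Proof.
have [ab ac bc] := abc_neq; have [xa xb xc xd] := x_neq.
move=> pa pb pc pd; rewrite !inE !negb_or => /andP[/andP[/andP[pa' pb'] pc'] pd'].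
apply/eqP/negPn/negP => px.
case: (boolP (is_edge S x p)) => xp.
  suff : #|p |: [set a; b; c; x]| <= 4.
    have c4 : #|[set a; b; c; x]| = 4 by rewrite cards4 // eq_sym.
    by rewrite cardsU1 c4 !inE !negb_or pa' pb' pc' px.
  apply: (sphere_clique_card S_stacked) => u w.
  have p_edge (v : V) : v \in [set a; b; c; x] -> is_edge S p v.
    by rewrite !inE -!orbA => /or4P[]/eqP->; rewrite // is_edge_sym.
  rewrite !in_setU1 => /orP[/eqP->|uK] /orP[/eqP->|wK] uw.
  - by rewrite eqxx in uw.
  - exact: p_edge.
  - by rewrite is_edge_sym; apply: p_edge.
  - exact: alpha_edge.
have xc_edge : is_edge S x c by apply: alpha_edge; rewrite ?inE ?eqxx ?orbT.
have cp : is_edge S c p by rewrite is_edge_sym.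
have xp' : x != p by rewrite eq_sym.
case/orP: (sphere_square_chord S_stacked xc_edge cp pd edge_dx xp' cd).
  by rewrite (negbTE xp).
by rewrite (negbTE cd_nonedge).
Qed.

Lemma tet_ab_vertex t p : t \in sbar_tets S -> a \in t -> b \in t -> p \in t ->
  p \notin [set a; b] -> p \in [set c; d; x].
Proof.
move=> tS at_ bt pt pab; case: (boolP (p \in [set c; d])) => [pcd|pcd].
  by rewrite inE pcd.
suff -> : p = x by rewrite !inE eqxx orbT.
move: pab pcd; rewrite !inE !negb_or => /andP[pa pb] /andP[pc pd].
have pa_edge : is_edge S p a by apply: (sbar_tet_edge tS).
have pb_edge : is_edge S p b by apply: (sbar_tet_edge tS).
have bp : is_edge T b p by rewrite is_edge_sym flip_edge_keep // !inE !negb_or pa pb.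
have pa_flip : is_edge T p a by rewrite flip_edge_keep // !inE !negb_or pa pb.
have wp w : w \in [set c; d] -> is_edge S p w.
  move=> wcd; rewrite is_edge_sym; apply: flip_common_nbr => //.
    by rewrite !inE !negb_or pc pd.
  by apply: contraTneq wcd => ->; rewrite !inE !negb_or pc pd.
apply: common_nbr_abcd pa_edge pb_edge (wp c (set21 c d)) (wp d (set22 c d)) _.
by rewrite !inE !negb_or pa pb pc pd.
Qed.

Lemma tet_abE t : t \in sbar_tets S -> a \in t -> b \in t -> t = alpha \/ t = beta.
Proof.
have [ab _ _] := abc_neq; have [xa xb _ _] := x_neq.
move=> tS at_ bt; case: (boolP (c \in t)) => ct.
  left; apply: (sphere_triangle_tet_uniq S_stacked abcS tS alphaC) => //.
  by apply/subsetP => u; rewrite !inE -!orbA => /or3P[]/eqP->.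
case: (boolP (d \in t)) => dt.
  right; apply: (sphere_triangle_tet_uniq S_stacked abdS tS betaC) => //.
  by apply/subsetP => u; rewrite !inE -!orbA => /or3P[]/eqP->.
suff : #|t| <= #|[set a; b; x]| by rewrite (sbar_tet_card tS) cards3 // eq_sym.
apply/subset_leq_card/subsetP => u ut; case: (boolP (u \in [set a; b])) => [|uab].
  by rewrite !inE => ->.
move: (tet_ab_vertex tS at_ bt ut uab); rewrite !inE -!orbA => /or3P[]/eqP e.
- by move: ct; rewrite -e ut.
- by move: dt; rewrite -e ut.
- by rewrite e eqxx !orbT.
Qed.

Lemma x_beta : x \in beta.
Proof.
have : ~~ (beta \subset [set a; b; d]).
  apply/negP => /subset_leq_card.
  by rewrite (sbar_tet_card betaC) (sphere_triangle_card S_stacked abdS).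
case/subsetPn => y ybeta yabd.
have yab : y \notin [set a; b] by move: yabd; rewrite !inE !negb_or => /andP[].
have [abeta bbeta dbeta] : [/\ a \in beta, b \in beta & d \in beta].
  by split; apply: (subsetP abd_beta); rewrite !inE eqxx ?orbT.
move: (tet_ab_vertex betaC abeta bbeta ybeta yab); rewrite !inE -!orbA => /or3P[]/eqP e.
- by move: cd_nonedge; rewrite -e is_edge_sym (sbar_tet_edge betaC dbeta ybeta) // e eq_sym.
- by move: yabd; rewrite e !inE eqxx orbT.
- by rewrite -e.
Qed.

Lemma betaE : beta = [set a; b; d; x].
Proof.
have [ab ad bd] := abd_neq; have [xa xb _ xd] := x_neq.
symmetry; apply: eq_subset_card; last by rewrite (sbar_tet_card betaC) cards4 // eq_sym.
apply/subsetP => u; rewrite !inE -!orbA => /or4P[]/eqP->; rewrite ?x_beta //;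
  by apply: (subsetP abd_beta); rewrite !inE eqxx ?orbT.
Qed.

Local Notation gamma := [set a; c; d; x].
Local Notation delta := [set b; c; d; x].

Lemma no_sbar_tet_cd t : t \in sbar_tets S -> c \in t -> d \in t -> False.
Proof. by move=> tS ct dt; move/negP: cd_nonedge; apply; apply: (sbar_tet_edge tS). Qed.

Lemma gamma_notin_sbar : gamma \notin sbar_tets S.
Proof. by apply/negP => /no_sbar_tet_cd; apply; rewrite !inE eqxx ?orbT. Qed.

Lemma delta_notin_sbar : delta \notin sbar_tets S.
Proof. by apply/negP => /no_sbar_tet_cd; apply; rewrite !inE eqxx ?orbT. Qed.

Lemma gamma_delta_in_flip : gamma \in sbar_tets T /\ delta \in sbar_tets T.
Proof.
have [ab ac bc] := abc_neq; have [_ ad bd] := abd_neq; have [xa xb xc xd] := x_neq.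
have [ax bx cx] : [/\ is_edge T a x, is_edge T b x & is_edge T c x].
  by split; apply: flip_edge_x; rewrite !inE eqxx ?orbT.
have dx : is_edge T d x.
  by apply: flip_edge_keep edge_dx _; rewrite !inE !negb_or (eq_sym d) ad (eq_sym d) bd.
have acd := is_edge_intro (acd_in_flip S a b c d).
have bcd := is_edge_intro (bcd_in_flip S a b c d).
split; apply: set4_in_sbar_tets; rewrite // 1?eq_sym //;
  first [by apply: acd; rewrite !inE eqxx ?orbT | by apply: bcd; rewrite !inE eqxx ?orbT].
Qed.

Lemma flip_tet_ab t : t \in sbar_tets T -> ~~ ((a \in t) && (b \in t)).
Proof.
move=> tT; apply/negP => /andP[at_ bt]; move/negP: flip_nonedge_ab; apply.
by apply: (sbar_tet_edge tT) => //; have [] := abc_neq.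
Qed.

Lemma flip_tet_cd t : t \in sbar_tets T -> c \in t -> d \in t -> t = gamma \/ t = delta.
Proof.
have [ab ac bc] := abc_neq; have [_ ad bd] := abd_neq; have [xa xb xc xd] := x_neq.
move=> tT ct dt.
have vertex u : u \in t -> u \in [set a; b; c; d] \/ u = x.
  move=> ut; case: (boolP (u \in [set a; b; c; d])) => [|uabcd]; [by left | right].
  move: (uabcd); rewrite !inE !negb_or => /andP[/andP[/andP[ua ub] uc] ud].
  have cd_nbr w : w \in [set c; d] -> is_edge S u w.
    move=> wcd; have wt : w \in t by move: wcd; rewrite !inE => /orP[]/eqP->.
    have uw : u != w by apply: contraTneq wcd => <-; rewrite !inE negb_or uc ud.
    case/orP: (flip_edge_inv (sbar_tet_edge tT ut wt uw)) => // /andP[].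
    by rewrite !inE (negbTE uc) (negbTE ud).
  have [uc' ud'] := conj (cd_nbr c (set21 c d)) (cd_nbr d (set22 c d)).
  have ab_nbr w : w \in [set a; b] -> is_edge S u w.
    move=> wab; have wu : w != u by apply: contraTneq wab => ->; rewrite !inE negb_or ua ub.
    have [wabc wabd] : w \in [set a; b; c] /\ w \in [set a; b; d].
      by move: wab; rewrite !inE => /orP[] ->; rewrite ?orbT.
    have wc : is_edge S w c by apply: (is_edge_intro abcS wabc); rewrite !inE eqxx orbT.
    have dw : is_edge S d w by apply: (is_edge_intro abdS _ wabd); rewrite !inE eqxx orbT.
    have cu : is_edge S c u by rewrite is_edge_sym.
    case/orP: (sphere_square_chord S_stacked wc cu ud' dw wu cd); first by rewrite is_edge_sym.
    by rewrite (negbTE cd_nonedge).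
  exact: common_nbr_abcd (ab_nbr a (set21 a b)) (ab_nbr b (set22 a b)) uc' ud' uabcd.
have [c4g c4d] : #|gamma| = 4 /\ #|delta| = 4 by split; rewrite cards4 // eq_sym.
case: (boolP (a \in t)) => at_; [left | right]; apply: eq_subset_card;
  rewrite ?(sbar_tet_card tT) ?c4g ?c4d //; apply/subsetP => u ut;
  (case: (vertex u ut) => [|->]; last by rewrite !inE eqxx !orbT);
  rewrite !inE -!orbA => /or4P[]/eqP eu; rewrite eu ?eqxx ?orbT //.
- by move: (flip_tet_ab tT); rewrite at_ -eu ut.
- by move: at_; rewrite -eu ut.
Qed.

Lemma flip_tet_sbar t : t \in sbar_tets T -> ~~ ((c \in t) && (d \in t)) -> t \in sbar_tets S.
Proof.
move=> tT not_cd; rewrite inE (sbar_tet_card tT) eqxx /=.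
apply/forallP => u; apply/implyP => ut; apply/forallP => w; apply/implyP => wt.
apply/implyP => uw; case/orP: (flip_edge_inv (sbar_tet_edge tT ut wt uw)) => // /andP[].
rewrite !inE => /orP[]/eqP eu /orP[]/eqP ew; move: uw not_cd;
  rewrite -?eu -?ew ?ut ?wt //; by rewrite eu ew eqxx.
Qed.

Lemma sbar_tet_flip t : t \in sbar_tets S -> t != alpha -> t != beta -> t \in sbar_tets T.
Proof.
move=> tS t_alpha t_beta; rewrite inE (sbar_tet_card tS) eqxx /=.
apply/forallP => u; apply/implyP => ut; apply/forallP => w; apply/implyP => wt.
apply/implyP => uw; apply: flip_edge_keep; first exact: sbar_tet_edge tS ut wt uw.
rewrite -negb_and; apply/negP => /andP[uab wab].
have [at_ bt] : a \in t /\ b \in t.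
  by move: uab wab ut wt uw; rewrite !inE => /orP[]/eqP-> /orP[]/eqP->; rewrite ?eqxx.
by case: (tet_abE tS at_ bt) => e; [move: t_alpha | move: t_beta]; rewrite e eqxx.
Qed.

Lemma sbar_flipE t : (t \in sbar_tets T) =
  [&& t \in sbar_tets S, t != alpha & t != beta] || (t == gamma) || (t == delta).
Proof.
have [gammaT deltaT] := gamma_delta_in_flip.
apply/idP/idP => [tT|]; last first.
  by case/orP => [/orP[/and3P[tS ta tb]|/eqP->]|/eqP->] //; apply: sbar_tet_flip.
case: (boolP ((c \in t) && (d \in t))) => [/andP[ct dt]|not_cd].
  by case: (flip_tet_cd tT ct dt) => ->; rewrite eqxx ?orbT.
have tS := flip_tet_sbar tT not_cd; rewrite tS /=; apply/orP; left; apply/orP; left.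
have ab_in s : s \in [set alpha; beta] -> (a \in s) && (b \in s).
  by rewrite !inE => /orP[]/eqP->; rewrite ?alphaE ?betaE !inE !eqxx ?orbT.
by apply/andP; split; apply: contraNneq (flip_tet_ab tT) => e; apply: ab_in;
  rewrite -e !inE eqxx ?orbT.
Qed.

Lemma dual_adj_flip t : t \in sbar_tets S -> t != alpha -> t != beta ->
  dual_adj t alpha + dual_adj t beta = dual_adj t gamma + dual_adj t delta.
Proof.
have [ab ac bc] := abc_neq; have [_ ad bd] := abd_neq; have [xa xb xc xd] := x_neq.
move=> tS t_alpha t_beta.
have not_ab : ~~ ((a \in t) && (b \in t)).
  apply/negP => /andP[at_ bt].
  by case: (tet_abE tS at_ bt) => e; [move: t_alpha | move: t_beta]; rewrite e eqxx.
have not_cd : ~~ ((c \in t) && (d \in t)) by apply/negP => /andP[]; exact: no_sbar_tet_cd.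
have t_gamma : t != gamma by apply: contraNneq gamma_notin_sbar => <-.
have t_delta : t != delta by apply: contraNneq delta_notin_sbar => <-.
move: t_alpha t_beta; rewrite alphaE betaE => t_alpha t_beta.
rewrite !dual_adj_set4 ?(sbar_tet_card tS) // 1?eq_sym //.
move: not_ab not_cd; case: (a \in t); case: (b \in t); case: (c \in t); case: (d \in t);
  by case: (x \in t).
Qed.

Lemma dual_adj_flip_or t : t \in sbar_tets S -> t != alpha -> t != beta ->
  dual_adj t alpha || dual_adj t beta = dual_adj t gamma || dual_adj t delta.
Proof.
move=> tS ta tb; have := dual_adj_flip tS ta tb.
by case: (dual_adj t alpha); case: (dual_adj t beta); case: (dual_adj t gamma);
  case: (dual_adj t delta).
Qed.

Lemma alpha_neq_beta : alpha != beta.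
Proof.
have [_ ac bc] := abc_neq; have [_ _ xc _] := x_neq; apply/eqP => ab_eq.
have : c \in beta by rewrite -ab_eq alphaE !inE eqxx !orbT.
by rewrite betaE !inE (negbTE cd) !(eq_sym c) (negbTE ac) (negbTE bc) (negbTE xc).
Qed.

Lemma gamma_neq_delta : gamma != delta.
Proof.
have [ab ac _] := abc_neq; have [_ ad _] := abd_neq; have [xa _ _ _] := x_neq.
apply/eqP => gd_eq; have : a \in delta by rewrite -gd_eq !inE eqxx.
by rewrite !inE (negbTE ab) (negbTE ac) (negbTE ad) (eq_sym a) (negbTE xa).
Qed.

Section Sigma.
Variable sigma : {set V}.
Hypotheses (sigmaC : sigma \in sbar_tets S) (deg_sigma : dual_deg (sbar_tets S) sigma = 4).
Local Notation C := (sbar_tets S).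
Local Notation C' := (sbar_tets T).
Local Notation R := (dual_adj_minus C sigma).
Local Notation R' := (dual_adj_minus C' sigma).

Lemma sigma_neq : [/\ sigma != alpha, sigma != beta, sigma != gamma & sigma != delta].
Proof.
have deg3 t := sphere_tet_on_triangle_deg S_stacked (t := t).
split.
- by apply: contraTneq (deg3 _ _ alphaC abcS abc_alpha) => <-; rewrite deg_sigma.
- by apply: contraTneq (deg3 _ _ betaC abdS abd_beta) => <-; rewrite deg_sigma.
- by apply: contraNneq gamma_notin_sbar => <-.
- by apply: contraNneq delta_notin_sbar => <-.
Qed.

Lemma sigma_in_flip : sigma \in C'.
Proof. by have [sa sb _ _] := sigma_neq; rewrite sbar_flipE sigmaC sa sb. Qed.

Lemma dual_deg_flip : dual_deg C' sigma = 4.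
Proof.
have [sa sb _ _] := sigma_neq; have [gammaT deltaT] := gamma_delta_in_flip.
move: deg_sigma; rewrite /dual_deg => <-.
rewrite (cardsD2 [set t in C | _] alpha_neq_beta) (cardsD2 [set t in C' | _] gamma_neq_delta).
have in_nbr A t : (t \in [set s in A | dual_adj sigma s]) = (t \in A) && dual_adj sigma t.
  exact: in_set.
rewrite !in_nbr alphaC betaC gammaT deltaT /= -(dual_adj_flip sigmaC sa sb).
congr (_ + _); apply: eq_card => t; rewrite !in_setD1 !in_nbr sbar_flipE.
case: (eqVneq t gamma) => [->|_]; first by rewrite (negbTE gamma_notin_sbar) !andbF.
case: (eqVneq t delta) => [->|_]; first by rewrite (negbTE delta_notin_sbar) !andbF.
by rewrite !orbF; case: (t \in C); case: (t != alpha); case: (t != beta).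
Qed.

Lemma alpha_beta_adj : R alpha beta.
Proof.
have [sa sb _ _] := sigma_neq; have [ab ad bd] := abd_neq; have [xa xb _ xd] := x_neq.
rewrite /dual_adj_minus alphaC betaC !(eq_sym _ sigma) sa sb /=.
have ne : alpha != [set a; b; d; x] by rewrite -betaE alpha_neq_beta.
rewrite betaE dual_adj_set4 ?(sbar_tet_card alphaC) // 1?eq_sym //.
by rewrite alphaE !inE !eqxx !orbT !addn1.
Qed.

Lemma gamma_delta_adj : R' gamma delta.
Proof.
have [_ _ sg sd] := sigma_neq; have [gammaT deltaT] := gamma_delta_in_flip.
have [ab ac bc] := abc_neq; have [_ ad bd] := abd_neq; have [xa xb xc xd] := x_neq.
rewrite /dual_adj_minus gammaT deltaT !(eq_sym _ sigma) sg sd /=.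
have c4 : #|gamma| = 4 by rewrite cards4 // eq_sym.
rewrite dual_adj_set4 // 1?eq_sym //; last by rewrite eq_sym gamma_neq_delta.
by rewrite !inE !eqxx !orbT !addn1.
Qed.

Lemma flip_gamma_connect t : t \in C -> t != sigma -> t != alpha -> t != beta ->
  dual_adj t alpha || dual_adj t beta -> connect R' gamma t.
Proof.
move=> tC ts ta tb; rewrite dual_adj_flip_or //.
have tC' : t \in C' by rewrite sbar_flipE tC ta tb.
have [_ _ sg sd] := sigma_neq; have [gammaT deltaT] := gamma_delta_in_flip.
case/orP => adj.
  by apply: connect1; rewrite /dual_adj_minus gammaT tC' (eq_sym gamma) sg ts dual_adj_sym.
apply: connect_trans (connect1 gamma_delta_adj) (connect1 _).
by rewrite /dual_adj_minus deltaT tC' (eq_sym delta) sd ts dual_adj_sym.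
Qed.

Lemma alpha_connect t : t \in C' -> t != sigma -> t != gamma -> t != delta ->
  dual_adj t gamma || dual_adj t delta -> connect R alpha t.
Proof.
move=> tC' ts tg td; move: (tC'); rewrite sbar_flipE (negbTE tg) (negbTE td) !orbF.
case/and3P => tC ta tb; rewrite -dual_adj_flip_or //.
have [sa sb _ _] := sigma_neq.
case/orP => adj.
  by apply: connect1; rewrite /dual_adj_minus alphaC tC (eq_sym alpha) sa ts dual_adj_sym.
apply: connect_trans (connect1 alpha_beta_adj) (connect1 _).
by rewrite /dual_adj_minus betaC tC (eq_sym beta) sb ts dual_adj_sym.
Qed.

Definition merge_ab s := if (s == alpha) || (s == beta) then gamma else s.
Definition merge_gd s := if (s == gamma) || (s == delta) then alpha else s.

Lemma connect_merge_ab s t : R s t -> connect R' (merge_ab s) (merge_ab t).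
Proof.
move=> st; move: (st); rewrite /dual_adj_minus => /and5P[sC tC ss ts adj].
have from_ab (u v : {set V}) : u \in C -> v \in C -> v != sigma -> (u == alpha) || (u == beta) ->
    ~~ ((v == alpha) || (v == beta)) -> dual_adj u v -> connect R' gamma v.
  move=> uC vC vs uab; rewrite negb_or => /andP[va vb] uv.
  apply: flip_gamma_connect => //.
  by case/orP: uab => /eqP <-; rewrite (dual_adj_sym v u) uv ?orbT.
rewrite /merge_ab; case: ifP => sab; case: ifP => tab.
- exact: connect0.
- by apply: (from_ab s t) => //; rewrite tab.
- by rewrite connect_minus_sym; apply: (from_ab t s) => //; rewrite ?sab // dual_adj_sym.
- apply: connect1; move: sab tab => /negbT/norP[sa sb] /negbT/norP[ta tb].
  by rewrite /dual_adj_minus !sbar_flipE sC tC sa sb ta tb ss ts adj.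
Qed.

Lemma connect_merge_gd s t : R' s t -> connect R (merge_gd s) (merge_gd t).
Proof.
move=> st; move: (st); rewrite /dual_adj_minus => /and5P[sC' tC' ss ts adj].
have from_gd (u v : {set V}) : u \in C' -> v \in C' -> v != sigma -> (u == gamma) || (u == delta) ->
    ~~ ((v == gamma) || (v == delta)) -> dual_adj u v -> connect R alpha v.
  move=> uC' vC' vs ugd; rewrite negb_or => /andP[vg vd] uv.
  apply: alpha_connect => //.
  by case/orP: ugd => /eqP <-; rewrite (dual_adj_sym v u) uv ?orbT.
rewrite /merge_gd; case: ifP => sgd; case: ifP => tgd.
- exact: connect0.
- by apply: (from_gd s t) => //; rewrite tgd.
- by rewrite connect_minus_sym; apply: (from_gd t s) => //; rewrite ?sgd // dual_adj_sym.
- apply: connect1; move: sgd tgd => /negbT/norP[sg sd] /negbT/norP[tg td].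
  move: sC' tC'; rewrite !sbar_flipE (negbTE sg) (negbTE sd) (negbTE tg) (negbTE td) !orbF.
  by case/and3P => sC _ _ /and3P[tC _ _]; rewrite /dual_adj_minus sC tC ss ts adj.
Qed.

Lemma not_connect_alpha_neq s : ~~ connect R alpha s -> (s != alpha) && (s != beta).
Proof.
move=> nc; apply/andP; split; apply: contraNneq nc => ->; first exact: connect0.
exact: connect1 alpha_beta_adj.
Qed.

(* Away from [alpha] and [beta], the two dual graphs coincide; paths through
   the contracted pairs {alpha, beta} and {gamma, delta} are transported by
   the maps [merge_ab] and [merge_gd]. *)
Lemma comp_minus_flip_far s : s \in C -> s != sigma -> ~~ connect R alpha s ->
  comp_minus C' sigma s = comp_minus C sigma s.
Proof.
move=> sC ss nc; have /andP[sa sb] := not_connect_alpha_neq nc.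
have s_gd : (s == gamma) || (s == delta) = false.
  apply/negbTE/norP; split; apply: contraTneq sC => ->;
    [exact: gamma_notin_sbar | exact: delta_notin_sbar].
have to_flip := connect_homo connect_merge_ab.
have of_flip := connect_homo connect_merge_gd.
apply/setP => t; rewrite !mem_comp_minus; apply/and3P/and3P => -[ts t_in st].
  case: (boolP ((t == gamma) || (t == delta))) => t_gd.
    have := of_flip _ _ st; rewrite /merge_gd s_gd t_gd => s_alpha.
    by move: nc; rewrite connect_minus_sym s_alpha.
  move: (t_in); rewrite sbar_flipE; move: t_gd => /norP[tg td].
  rewrite (negbTE tg) (negbTE td) !orbF => /and3P[tC _ _]; split => //.
  by have := of_flip _ _ st; rewrite /merge_gd s_gd (negbTE tg) (negbTE td).
have /andP[ta tb] : (t != alpha) && (t != beta).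
  apply: not_connect_alpha_neq; apply: contra nc => alpha_t.
  by apply: connect_trans alpha_t _; rewrite connect_minus_sym.
split => //; first by rewrite sbar_flipE t_in ta tb.
by have := to_flip _ _ st; rewrite /merge_ab (negbTE sa) (negbTE sb) (negbTE ta) (negbTE tb).
Qed.

Lemma comps_minus_flip : comps_minus C' sigma =
  comp_minus C' sigma gamma |: (comps_minus C sigma :\ comp_minus C sigma alpha).
Proof.
have [sa sb sg sd] := sigma_neq; have [gammaT _] := gamma_delta_in_flip.
apply/setP => X; rewrite !comps_minusE in_setU1 in_setD1; apply/idP/idP.
  case/imsetP => s; rewrite in_setD1 => /andP[ss sC'] ->.
  case: (boolP (connect R' gamma s)) => gs; first by rewrite -(comp_minus_eq gs) eqxx.
  have [s_gamma s_delta] : s != gamma /\ s != delta.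
    by split; apply: contraNneq gs => ->; [exact: connect0 | exact: connect1 gamma_delta_adj].
  move: sC'; rewrite sbar_flipE (negbTE s_gamma) (negbTE s_delta) !orbF.
  case/and3P => sC s_alpha s_beta.
  have nc : ~~ connect R alpha s.
    apply: contra gs => /(connect_homo connect_merge_ab).
    by rewrite /merge_ab eqxx (negbTE s_alpha) (negbTE s_beta).
  rewrite comp_minus_flip_far //; apply/orP; right; apply/andP; split.
    apply: contra nc => /eqP e.
    have : alpha \in comp_minus C sigma s by rewrite e mem_comp_minus eq_sym sa alphaC connect0.
    by rewrite mem_comp_minus connect_minus_sym => /and3P[].
  by apply/imsetP; exists s; rewrite // in_setD1 ss sC.
case/orP => [/eqP->|/andP[nX /imsetP[s sIn eX]]].
  by apply/imsetP; exists gamma; rewrite // in_setD1 eq_sym sg gammaT.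
move: sIn nX; rewrite eX in_setD1 => /andP[ss sC] nX.
have nc : ~~ connect R alpha s by apply: contra nX => /comp_minus_eq ->.
have /andP[s_alpha s_beta] := not_connect_alpha_neq nc.
rewrite -comp_minus_flip_far //; apply/imsetP; exists s => //.
by rewrite in_setD1 ss sbar_flipE sC s_alpha s_beta.
Qed.

Lemma comp_gamma_notin : comp_minus C' sigma gamma \notin comps_minus C sigma.
Proof.
have [_ _ sg _] := sigma_neq; have [gammaT _] := gamma_delta_in_flip.
apply/imsetP => -[s _ e]; have : gamma \in comp_minus C' sigma gamma.
  by rewrite mem_comp_minus eq_sym sg gammaT connect0.
by rewrite e mem_comp_minus (negbTE gamma_notin_sbar) andbF.
Qed.

Lemma flip_sigma_components :
  [/\ sigma \in C', dual_deg C' sigma = 4 &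
      (exists2 G4, G4 \in comps_minus C sigma &
        [/\ alpha \in G4, beta \in G4 &
          (exists G4', [/\ dual_tree G4', G4' \notin comps_minus C sigma :\ G4 &
            comps_minus C' sigma = G4' |: (comps_minus C sigma :\ G4)])])].
Proof.
have [sa sb sg _] := sigma_neq; have [gammaT _] := gamma_delta_in_flip.
split; [exact: sigma_in_flip | exact: dual_deg_flip |].
exists (comp_minus C sigma alpha).
  by apply/imsetP; exists alpha; rewrite // in_setD1 eq_sym sa.
have alpha_G4 : alpha \in comp_minus C sigma alpha.
  by rewrite mem_comp_minus eq_sym sa alphaC connect0.
have beta_G4 : beta \in comp_minus C sigma alpha.
  by rewrite mem_comp_minus eq_sym sb betaC (connect1 alpha_beta_adj).
split => //; exists (comp_minus C' sigma gamma); split; last exact: comps_minus_flip.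
  by apply: comp_minus_dual_tree T_stacked _; rewrite in_setD1 eq_sym sg gammaT.
by apply: contra comp_gamma_notin; rewrite in_setD1 => /andP[].
Qed.

End Sigma.
End FourthVertex.
End Flip.

Theorem corollary4p4 (V : finType) (S : {set {set V}}) (a b c d : V)
  (alphabar betabar sigma : {set V}) :
  stacked_sphere S ->
  [set a; b; c] \in S -> [set a; b; d] \in S -> c != d ->
  ~~ is_edge S c d ->
  alphabar \in sbar_tets S -> [set a; b; c] \subset alphabar ->
  betabar \in sbar_tets S -> [set a; b; d] \subset betabar ->
  sigma \in sbar_tets S -> dual_deg (sbar_tets S) sigma = 4 ->
  stacked_sphere (flip S a b c d) ->
  [/\ sigma \in sbar_tets (flip S a b c d),
      dual_deg (sbar_tets (flip S a b c d)) sigma = 4 &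
      (exists2 G4, G4 \in comps_minus (sbar_tets S) sigma &
        [/\ alphabar \in G4, betabar \in G4 &
          (exists G4', [/\ dual_tree G4', G4' \notin comps_minus (sbar_tets S) sigma :\ G4 &
            comps_minus (sbar_tets (flip S a b c d)) sigma =
            G4' |: (comps_minus (sbar_tets S) sigma :\ G4)])])].
Proof.
move=> S_stacked abcS abdS cd cd_nonedge alphaC abc_alpha betaC abd_beta sigmaC deg4 T_stacked.
have [x x_alpha x_notin] : exists2 x, x \in alphabar & x \notin [set a; b; c].
  apply/subsetPn/negP => /subset_leq_card.
  by rewrite (sbar_tet_card alphaC) (sphere_triangle_card S_stacked abcS).
exact: (flip_sigma_components S_stacked abcS abdS cd cd_nonedge T_stacked
  alphaC abc_alpha betaC abd_beta x_alpha x_notin sigmaC deg4).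
Qed.
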